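(* Let $\mathcal C$ be a real polynomial curve with proper real polynomial parametrization $(x(t),y(t))$. If $r=\deg_t x(t)$ and $s=\deg_t y(t)$ are both odd and $r\ne s$, then $\mathcal C$ does not have mirror symmetry.
   Context: A real polynomial curve is $\mathcal C=\{(x(t),y(t)):t\in\mathbb R\}$ with $x,y\in\mathbb R[t]$ not both constant; the parametrization is proper if it is injective for almost all $t$. $\mathcal C$ has mirror symmetry if there is a line such that the reflection in it maps $\mathcal C$ onto itself. *)

From HB Require Import structures.
From mathcomp Require Import all_boot all_order all_algebra.
Set Implicit Arguments. Unset Strict Implicit. Unset Printing Implicit Defensive.
Import Order.TTheory GRing.Theory Num.Theory.
Local Open Scope ring_scope.

Section Curves.
Variable R : rcfType.

Definition curve_pt (x y : {poly R}) (t : R) : R * R := (x.[t], y.[t]).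

Definition on_curve (x y : {poly R}) (P : R * R) : Prop :=
  exists t : R, P = curve_pt x y t.

(* Proper parametrization: injective for almost all t, i.e. outside a finite
   exceptional set S of parameters, t1 is the only parameter of its point. *)
Definition proper_param (x y : {poly R}) : Prop :=
  exists S : seq R, forall t1 t2 : R, t1 \notin S ->
    curve_pt x y t1 = curve_pt x y t2 -> t1 = t2.

(* Reflection in the line a*X + b*Y = c (with (a,b) <> (0,0)). *)
Definition line_reflection (a b c : R) (P : R * R) : R * R :=
  let k := 2 * (a * P.1 + b * P.2 - c) / (a ^+ 2 + b ^+ 2) in
  (P.1 - k * a, P.2 - k * b).

Definition mirror_symmetric (x y : {poly R}) : Prop :=
  exists a b c : R, (a, b) != (0, 0) /\
    (forall P, on_curve x y P -> on_curve x y (line_reflection a b c P)) /\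
    (forall Q, on_curve x y Q ->
       exists P, on_curve x y P /\ line_reflection a b c P = Q).

End Curves.

From HB Require Import structures.
From mathcomp Require Import all_boot all_order all_algebra.
From mathcomp.real_closed Require Import polyrcf.
From mathcomp Require Import ring.
Set Implicit Arguments. Unset Strict Implicit. Unset Printing Implicit Defensive.
Import Order.TTheory GRing.Theory Num.Theory.
Local Open Scope ring_scope.

(* Suppose the reflection in the line  a X + b Y = c  maps the
   curve into itself.  Along the curve consider the two polynomials
     g = -b x + a y   (position along the line),
     h =  a x + b y - c   (signed distance to the line, up to a factor);
   the reflection fixes the first coordinate and negates the second, so every
   parameter t has a partner u with  g(u) = g(t)  and  h(u) = -h(t).
   Since deg x and deg y are distinct odd numbers, every nontrivial linear
   combination of x and y has odd degree, so g has odd degree and h is not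
   constant.  After normalising both leading coefficients to be positive,
   h > 0 on some ray [N, +oo), while an odd-degree g is bounded above on
   (-oo, N] yet unbounded on [N, +oo).  Taking t large, its partner u has
   h(u) < 0, hence u < N, hence g(u) is bounded -- but g(u) = g(t) is huge.
   The file first proves the needed facts on odd-degree polynomials over a
   real field, then the "no reflected fibres" lemma, then the invariants of
   a line reflection, and finally the theorem. *)

Lemma odd_size_comb (R : idomainType) (x y : {poly R}) (a b : R) :
  (a, b) != (0, 0) ->
  odd (size x).-1 -> odd (size y).-1 -> (size x).-1 <> (size y).-1 ->
  odd (size (a *: x + b *: y)).-1.
Proof.
move=> ab ox oy dxy.
have [a0 | a0] := eqVneq a 0.
  rewrite {}a0 in ab *.
  have b0 : b != 0 by apply: contraNneq ab => ->.
  by rewrite scale0r add0r size_scale.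
have [-> | b0] := eqVneq b 0; first by rewrite scale0r addr0 size_scale.
have [lt|gt|eq] := ltngtP (size x) (size y).
- by rewrite addrC size_polyDl !size_scale.
- by rewrite size_polyDl !size_scale.
- by rewrite eq in dxy.
Qed.

Lemma odd_size_addC (R : nzRingType) (p : {poly R}) (c : R) :
  odd (size p).-1 -> odd (size (p + c%:P)).-1.
Proof.
move=> op; have p_gt1 : (1 < size p)%N by case: (size p) op => [|[|k]].
by rewrite size_polyDl // (leq_ltn_trans (size_polyC_leq1 c)).
Qed.

Lemma odd_size_neq0 (R : nzRingType) (p : {poly R}) : odd (size p).-1 -> p != 0.
Proof. by apply: contraTneq => ->; rewrite size_poly0. Qed.

Lemma lead_coef_self_scale_gt0 (R : realDomainType) (p : {poly R}) :
  p != 0 -> 0 < lead_coef (lead_coef p *: p).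
Proof.
move=> p0; rewrite lead_coefZ -expr2 exprn_even_gt0 //.
by rewrite lead_coef_eq0 p0 orbT.
Qed.

Section OddDegree.
Variable R : realFieldType.

Lemma odd_poly_neg_minfty (p : {poly R}) :
  0 < lead_coef p -> odd (size p).-1 ->
  exists n : R, forall u, u <= n -> p.[u] < 0.
Proof.
move=> lp_gt0 op; pose q := - (p \Po - 'X).
have lq : lead_coef q = lead_coef p.
  rewrite /q lead_coefN lead_coef_comp ?size_polyN ?size_polyX //.
  by rewrite lead_coefN lead_coefX -signr_odd op mulrN1 opprK.
rewrite -lq in lp_gt0; have [n Hn] := poly_pinfty_gt_lc lp_gt0.
exists (- n) => u; rewrite lerNr => /Hn.
rewrite /q hornerN horner_comp hornerN hornerX opprK => qu.
by rewrite -oppr_gt0 (lt_le_trans lp_gt0).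
Qed.

Lemma odd_poly_bounded_left (p : {poly R}) (N : R) :
  0 < lead_coef p -> odd (size p).-1 ->
  exists B : R, forall u, u <= N -> p.[u] <= B.
Proof.
move=> lp_gt0 op; have [n Hn] := odd_poly_neg_minfty lp_gt0 op.
have [ub Hub] := poly_itv_bound p n N.
exists (Num.max 0 ub) => u uN; rewrite le_max.
have [un | nu] := lerP u n; first by rewrite ltW ?Hn.
apply/orP; right; apply: le_trans (ler_norm _) (Hub _ _).
by rewrite ltW ?uN.
Qed.

Lemma no_reflected_fibres_pos (g h : {poly R}) :
  0 < lead_coef g -> 0 < lead_coef h -> odd (size g).-1 ->
  ~ (forall t, exists u, g.[u] = g.[t] /\ h.[u] = - h.[t]).
Proof.
move=> lg lh og partner.
have g_gt1 : (1 < size g)%N by case: (size g) og => [|[|k]].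
have [N h_pos] := poly_pinfty_gt_lc lh.
have [B g_le] := odd_poly_bounded_left N lg og.
have [M g_ge] := poly_lim_infty (B + 1) lg g_gt1.
pose t := Num.max N M; have [u [gu hu]] := partner t.
have tN : N <= t by rewrite le_max lexx.
have tM : M <= t by rewrite le_max lexx orbT.
have [Nu | uN] := lerP N u.
  have : 0 < h.[u] by apply: lt_le_trans lh (h_pos _ Nu).
  by rewrite hu oppr_gt0 ltNge ltW // (lt_le_trans lh (h_pos _ tN)).
have : B + 1 <= B by rewrite (le_trans (g_ge _ tM)) // -gu g_le // ltW.
by rewrite gerDl ler10.
Qed.

Lemma no_reflected_fibres (g h : {poly R}) :
  odd (size g).-1 -> h != 0 ->
  ~ (forall t, exists u, g.[u] = g.[t] /\ h.[u] = - h.[t]).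
Proof.
move=> og h0 partner.
apply: (@no_reflected_fibres_pos (lead_coef g *: g) (lead_coef h *: h)).
- exact/lead_coef_self_scale_gt0/odd_size_neq0.
- exact: lead_coef_self_scale_gt0.
- by rewrite size_scale // lead_coef_eq0 odd_size_neq0.
- move=> t; have [u [gu hu]] := partner t.
  by exists u; rewrite !hornerZ gu hu mulrN.
Qed.

End OddDegree.

Lemma line_reflection_invariants (R : rcfType) (a b c : R) (P : R * R) :
  a ^+ 2 + b ^+ 2 != 0 ->
  let Q := line_reflection a b c P in
  - b * Q.1 + a * Q.2 = - b * P.1 + a * P.2 /\
  a * Q.1 + b * Q.2 - c = - (a * P.1 + b * P.2 - c).
Proof. by move=> nab; rewrite /line_reflection /=; split; [ring | field]. Qed.

(* Only the inclusion of the reflected curve in the curve is used. *)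
Theorem corollary17 (R : rcfType) (x y : {poly R}) :
  (1 < size x)%N \/ (1 < size y)%N ->
  proper_param x y ->
  odd (size x).-1 -> odd (size y).-1 -> (size x).-1 <> (size y).-1 ->
  ~ mirror_symmetric x y.
Proof.
move=> _ _ ox oy dxy [a [b [c [ab [maps_into _]]]]].
have nab : a ^+ 2 + b ^+ 2 != 0.
  apply: contra ab; rewrite paddr_eq0 ?sqr_ge0 // !expf_eq0 /=.
  by case/andP=> /eqP-> /eqP->.
pose g := (- b) *: x + a *: y.
pose h := a *: x + b *: y + (- c)%:P.
have og : odd (size g).-1.
  by apply: odd_size_comb => //; apply: contra ab; rewrite !xpair_eqE oppr_eq0 andbC.
have h0 : h != 0 by apply/odd_size_neq0/odd_size_addC/odd_size_comb.
apply: (no_reflected_fibres og h0) => t.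
have [u Pu] := maps_into _ (ex_intro _ t erefl).
have [gQ hQ] := line_reflection_invariants c (curve_pt x y t) nab.
rewrite Pu /curve_pt /= in gQ hQ.
by exists u; rewrite /g /h !(hornerD, hornerZ, hornerC) gQ hQ.
Qed.
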